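(* Let $\mathfrak g$ be a nilpotent real Lie algebra with an abelian complex structure $L$, and let $0=\mathfrak z^0\subset\mathfrak z^1\subset\dots\subset\mathfrak z^k=\mathfrak g$ be its upper central series. Then every $\mathfrak z^i$ is $L$-invariant. If $\mathfrak g$ carries an abelian hypercomplex structure $(I,J,K)$, then every $\mathfrak z^i$ is $\mathbb H$-invariant.
   Context: The upper central series is defined by $\mathfrak z^0=0$, $\mathfrak z^i=\{x\in\mathfrak g:[x,\mathfrak g]\subset\mathfrak z^{i-1}\}$. A complex structure on $\mathfrak g$ is a linear $L$ with $L^2=-1$ such that $\mathfrak g^{1,0}=\{x\in\mathfrak g\otimes\mathbb C:Lx=\sqrt{-1}x\}$ is a subalgebra of $\mathfrak g\otimes\mathbb C$; it is abelian if $\mathfrak g^{1,0}$ is abelian, equivalently $[Lx,y]=-[x,Ly]$ for all $x,y$. A hypercomplex structure is a triple $(I,J,K)$ of complex structures with $I^2=J^2=K^2=-1$, $IJ=-JI=K$; it is abelian if $I,J,K$ are abelian. *)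

From mathcomp Require Import all_boot all_order all_algebra.
From mathcomp Require Import reals.
Set Implicit Arguments. Unset Strict Implicit. Unset Printing Implicit Defensive.
Import GRing.Theory.
Local Open Scope ring_scope.

Section LieDefs.
Variables (R : realType) (V : vectType R).

Definition is_lie_bracket (br : V -> V -> V) : Prop :=
  [/\ forall (a : R) x y z, br (a *: x + y) z = a *: br x z + br y z,
      forall (a : R) x y z, br x (a *: y + z) = a *: br x y + br x z,
      forall x, br x x = 0
    & forall x y z, br x (br y z) + br y (br z x) + br z (br x y) = 0].

Fixpoint ucs (br : V -> V -> V) (i : nat) : V -> Prop :=
  match i with
  | 0 => fun x => x = 0
  | i'.+1 => fun x => forall y, ucs br i' (br x y)
  end.

Definition lie_nilpotent (br : V -> V -> V) : Prop :=
  exists k, forall x, ucs br k x.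

(* Complex structure: L^2 = -1 and g^{1,0} is a subalgebra of g (x) C,
   expressed (equivalently) as the vanishing of the Nijenhuis tensor. *)
Definition complex_structure (br : V -> V -> V) (L : {linear V -> V}) : Prop :=
  (forall x, L (L x) = - x) /\
  (forall x y, br (L x) (L y) - L (br (L x) y) - L (br x (L y)) - br x y = 0).

(* Abelian: [Lx, y] = - [x, Ly] (equivalently g^{1,0} abelian). *)
Definition abelian_complex_structure (br : V -> V -> V) (L : {linear V -> V})
  : Prop :=
  complex_structure br L /\ (forall x y, br (L x) y = - br x (L y)).

Definition abelian_hypercomplex_structure (br : V -> V -> V)
  (I J K : {linear V -> V}) : Prop :=
  [/\ abelian_complex_structure br I, abelian_complex_structure br J,
      abelian_complex_structure br K,
      forall x, I (J x) = K x
    & forall x, J (I x) = - K x].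

Definition stable_under (S : V -> Prop) (L : V -> V) : Prop :=
  forall x, S x -> S (L x).

End LieDefs.

From mathcomp Require Import all_boot all_order all_algebra.
From mathcomp Require Import reals.
Import GRing.Theory.
Local Open Scope ring_scope.

(* If [x, g] lies in z^(i-1), then [Lx, y] = -[x, Ly] lies there too, since
   z^(i-1) is closed under negation. *)

Section UpperCentralSeries.
Variables (R : realType) (V : vectType R) (br : V -> V -> V).
Hypothesis br_lie : is_lie_bracket br.

Lemma lie_br0l y : br 0 y = 0.
Proof.
have [brDl _ _ _] := br_lie.
have := brDl 1 0 0 y; rewrite !scale1r !addr0 => br0_double.
by apply: (addrI (br 0 y)); rewrite -br0_double addr0.
Qed.

Lemma lie_brNl x y : br (- x) y = - br x y.
Proof.
have [brDl _ _ _] := br_lie.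
by have := brDl (-1) x 0 y; rewrite addr0 lie_br0l addr0 !scaleN1r.
Qed.

Lemma ucsN i x : ucs br i x -> ucs br i (- x).
Proof.
elim: i x => [|i IHi] x /=; first by move->; rewrite oppr0.
by move=> ucs_x y; rewrite lie_brNl; apply: IHi.
Qed.

Lemma ucs_stable_abelian (L : {linear V -> V}) :
  abelian_complex_structure br L -> forall i, stable_under (ucs br i) L.
Proof.
move=> [_ brLl] [|i] x /=; first by move->; rewrite linear0.
by move=> ucs_x y; rewrite brLl; apply: ucsN.
Qed.

End UpperCentralSeries.

Theorem lemma4p1 (R : realType) (V : vectType R) (br : V -> V -> V) :
  is_lie_bracket br -> lie_nilpotent br ->
  (forall L : {linear V -> V}, abelian_complex_structure br L ->
     forall i, stable_under (ucs br i) L) /\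
  (forall I J K : {linear V -> V}, abelian_hypercomplex_structure br I J K ->
     forall i, [/\ stable_under (ucs br i) I, stable_under (ucs br i) J
                 & stable_under (ucs br i) K]).
Proof.
move=> br_lie _; split; first exact: ucs_stable_abelian.
by move=> I J K [abI abJ abK _ _] i; split; apply: ucs_stable_abelian.
Qed.
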